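(* Let $p(x)=x^n+p_{n-1}x^{n-1}+\cdots+p_0\in\mathcal{O}[x]$ and let $(p,\mathcal{D})$ be a GNS over $\mathcal{O}$ with associated fundamental domain $\mathcal{F}$. Set $p_n=1$, $\Delta=\mathcal{N}\cdot\boldsymbol{\omega}$ and $Z=\{\sum_{j=1}^n\delta_jp_j:\delta_j\in\Delta\}$. Assume (i) $Z+\mathcal{D}\subset\mathcal{D}+p_0\Delta$; (ii) $Z\subset\mathcal{D}\cup(\mathcal{D}-p_0)$; (iii) $\{\sum_{j\in J}p_j: J\subseteq\{1,\ldots,n\}\}\subseteq\mathcal{D}$. Then $(p,\mathcal{D})$ has the finiteness property.
   Context: $\mathbb{K}$ is a number field of degree $k$, $\mathcal{O}$ an order in $\mathbb{K}$ with $\mathbb{Z}$-basis $\omega_1=1,\ldots,\omega_k$, $\boldsymbol{\omega}=(\omega_1,\ldots,\omega_k)$. A GNS over $\mathcal{O}$ is a pair $(p,\mathcal{D})$ with $p\in\mathcal{O}[x]$ monic and $\mathcal{D}\subset\mathcal{O}$ a complete residue system modulo $p(0)$ containing $0$; it has the finiteness property if every $a\in\mathcal{O}[x]$ satisfies $a\equiv\sum_{j=0}^{\ell-1}d_jx^j\pmod p$ for some $\ell\in\mathbb{N}$, $d_j\in\mathcal{D}$. A fundamental domain associated with $(p,\mathcal{D})$ is a bounded set $\mathcal{F}\subset\mathbb{R}^k$ with $\mathbb{R}^k=\mathcal{F}+\mathbb{Z}^k$ disjointly and $\mathcal{D}=\{p(0)\sum_j f_j\omega_j:(f_1,\ldots,f_k)\in\mathcal{F}\}\cap\mathcal{O}$.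 $\mathcal{N}=\{\mathbf{z}\in\mathbb{Z}^k:\overline{\mathcal{F}}\cap(\overline{\mathcal{F}}+\mathbf{z})\neq\emptyset\}$ and $\mathcal{N}\cdot\boldsymbol{\omega}=\{\sum_j z_j\omega_j:\mathbf{z}\in\mathcal{N}\}$. Sums of sets are Minkowski sums, $p_0\Delta=\{p_0\delta:\delta\in\Delta\}$. *)

From HB Require Import structures.
From mathcomp Require Import all_boot all_order all_algebra.
From Stdlib Require Import Reals.
Set Implicit Arguments. Unset Strict Implicit. Unset Printing Implicit Defensive.
Import GRing.Theory.

Definition IntR (z : int) : R :=
  match z with Posz n => INR n | Negz n => Ropp (INR n.+1) end.

Definition Rvec (k : nat) := 'I_k -> R.

Definition Rsum (k : nat) (g : 'I_k -> R) : R := \big[Rplus/R0]_(j < k) g j.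

(* topological closure in R^k (sup-norm, equivalent to Euclidean) *)
Definition closureR (k : nat) (F : Rvec k -> Prop) (x : Rvec k) : Prop :=
  forall eps : R, Rlt R0 eps ->
    exists f, F f /\ forall i, Rlt (Rabs (Rminus (x i) (f i))) eps.

Definition is_fundamental_domain (k : nat) (F : Rvec k -> Prop) : Prop :=
  [/\ (exists B : R, forall f, F f -> forall i, Rle (Rabs (f i)) B),
      (forall x : Rvec k, exists f (z : 'I_k -> int),
          F f /\ forall i, x i = Rplus (f i) (IntR (z i))) &
      (forall f f' (z z' : 'I_k -> int), F f -> F f' ->
          (forall i, Rplus (f i) (IntR (z i)) = Rplus (f' i) (IntR (z' i))) ->
          forall i, z i = z' i)].

Definition neighbourset (k : nat) (F : Rvec k -> Prop) (z : 'I_k -> int) : Prop :=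
  exists x : Rvec k,
    closureR F x /\ closureR F (fun i => Rminus (x i) (IntR (z i))).

Local Open Scope ring_scope.

Definition dvdO (O : idomainType) (a b : O) : Prop := exists c : O, b = a * c.

Definition complete_residue_system (O : idomainType) (m : O) (D : O -> Prop) : Prop :=
  (forall a : O, exists d, D d /\ dvdO m (a - d)) /\
  (forall d d', D d -> D d' -> dvdO m (d - d') -> d = d').

Definition GNS (O : idomainType) (p : {poly O}) (D : O -> Prop) : Prop :=
  [/\ p \is monic, complete_residue_system p`_0 D & D 0].

Definition finiteness_property (O : idomainType) (p : {poly O}) (D : O -> Prop) : Prop :=
  forall a : {poly O}, exists (l : nat) (d : 'I_l -> O),
    (forall j, D (d j)) /\
    exists q : {poly O}, a - \sum_(j < l) d j *: 'X^j = q * p.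

(* F is a fundamental domain associated with (p, D), where coord gives the
   coordinates w.r.t. the Z-basis omega:  D = {p(0) sum_j f_j omega_j : f in F} ∩ O,
   written out in coordinates. *)
Definition assoc_fundamental_domain (O : idomainType) (k : nat)
    (omega : 'I_k -> O) (coord : O -> 'I_k -> int)
    (p : {poly O}) (D : O -> Prop) (F : Rvec k -> Prop) : Prop :=
  is_fundamental_domain F /\
  forall d : O, D d <->
    exists f, F f /\ forall i,
      IntR (coord d i) = Rsum (fun j => Rmult (f j) (IntR (coord (p`_0 * omega j) i))).

Definition DeltaSet (O : idomainType) (k : nat) (omega : 'I_k -> O)
    (F : Rvec k -> Prop) (x : O) : Prop :=
  exists z : 'I_k -> int, neighbourset F z /\ x = \sum_(j < k) omega j *~ z j.

Definition Zset (O : idomainType) (k : nat) (omega : 'I_k -> O)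
    (F : Rvec k -> Prop) (n : nat) (p : {poly O}) (x : O) : Prop :=
  exists delta : 'I_n -> O, (forall j, DeltaSet omega F (delta j)) /\
    x = \sum_(j < n) delta j * p`_(j.+1).

From HB Require Import structures.
From Stdlib Require Import Reals Lra Lia Classical FunctionalExtensionality.
From mathcomp Require Import all_boot all_order all_algebra.
From mathcomp Require Import Rstruct zify ring.
Import GRing.Theory Num.Theory.
Set Implicit Arguments. Unset Strict Implicit. Unset Printing Implicit Defensive.
Local Open Scope ring_scope.

(* First, the neighbour set [N] generates [Z^k]: moving a point
   along a segment, the tile [g + F] containing it only ever changes to a
   neighbouring tile, because near any point only finitely many tiles occur and
   those not touching the current tile stay at positive distance; a
   connectedness argument on [0, 1] then reaches every translate.  Hence every
   element of [O] is a sum of elements of [Delta].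
   Second, adding [c X^j] with [c] in [Delta] preserves representability by a
   digit polynomial modulo [p].  One expands digit by digit, writing
   [a_0 + sum_j e_j p_(j+1) = d + p_0 c'] and passing the carry [-c'] upwards:
   by (i) all carries stay in [Delta] while digits remain, then by (ii) every new
   carry lies in [{0, 1}], and once all carries lie in [{0, 1}] condition (iii)
   turns them into digits until none is left. *)

Lemma IntRE (z : int) : IntR z = z%:~R.
Proof.
case: z => n; first by change (INR n = n%:R); rewrite INRE.
by change (Ropp (INR n.+1) = (Negz n)%:~R); rewrite INRE NegzE mulrNz.
Qed.

Lemma IntRB a b : IntR (a - b) = Rminus (IntR a) (IntR b).
Proof. by rewrite !IntRE intrB. Qed.

Lemma IntRN a : IntR (- a) = Ropp (IntR a).
Proof. by rewrite !IntRE mulrNz. Qed.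

Lemma Rabs_IntR z : Rabs (IntR z) = INR `|z|%N.
Proof.
case: z => n; first exact/Rabs_right/Rle_ge/pos_INR.
by change (Rabs (Ropp (INR n.+1)) = INR n.+1); rewrite Rabs_Ropp; exact/Rabs_right/Rle_ge/pos_INR.
Qed.

Definition vsub k (a b : 'I_k -> int) : 'I_k -> int := fun i => a i - b i.
Definition vopp k (a : 'I_k -> int) : 'I_k -> int := fun i => - a i.

Inductive nb_span k (F : Rvec k -> Prop) : ('I_k -> int) -> Prop :=
  | nb_span0 : nb_span F (fun _ => 0)
  | nb_spanD z w : nb_span F z -> neighbourset F w -> nb_span F (fun i => z i + w i).

Definition box_dec k K (v : {ffun 'I_k -> 'I_(K.*2.+1)}) : 'I_k -> int :=
  fun i => (v i)%:Z - K%:Z.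

Lemma box_dec_surj k K (g : 'I_k -> int) :
  (forall i, `|g i| <= K)%N -> exists v, @box_dec k K v = g.
Proof.
move=> gK; exists [ffun i => inord `|g i + K%:Z|]; apply: functional_extensionality => i.
have giK := gK i; rewrite /box_dec ffunE inordK; last by rewrite -muln2; lia.
by rewrite gez0_abs; [rewrite addrK | lia].
Qed.

Definition subv k (y : Rvec k) (g : 'I_k -> int) : Rvec k :=
  fun i => Rminus (y i) (IntR (g i)).

Definition nearv k (e : R) (y y' : Rvec k) : Prop :=
  forall i, Rlt (Rabs (Rminus (y' i) (y i))) e.

Local Open Scope R_scope.

Lemma unit_interval_connected (P : R -> Prop) :
  (forall T, 0 <= T <= 1 -> exists2 del, 0 < del &
     forall t u, Rabs (t - T) < del -> Rabs (u - T) < del -> P t -> P u) ->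
  P 0 -> P 1.
Proof.
move=> Plocal P0.
pose E t := 0 <= t <= 1 /\ forall u, 0 <= u <= t -> P u.
have E0 : E 0 by split=> [|u Hu]; [lra | have -> : u = 0 by lra].
have bE : bound E by exists 1 => t [Ht _]; lra.
have [T [ubT lubT]] := completeness E bE (ex_intro _ 0 E0).
have below_sup : forall eps, 0 < eps -> exists t, E t /\ T - eps < t.
  move=> eps eps0; apply: NNPP => none.
  suff : T <= T - eps by lra.
  apply: lubT => t Et; apply: Rnot_lt_le => lt; apply: none; by exists t.
have T01 : 0 <= T <= 1 by split; [exact: ubT | apply: lubT => t [[_ ?] _]].
have [del del0 Hdel] := Plocal T T01.
case: T01 => T0 T1le.
have [t [Et Ht]] := below_sup del del0.
have tT : t <= T := ubT t Et.
have Pnear : forall u, Rabs (u - T) < del -> P u.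
  move=> u Hu; apply: (Hdel t) Hu _; last by case: Et => Ht01 Pt; apply: Pt; lra.
  by apply: Rabs_def1; lra.
suff T1 : T = 1 by apply: Pnear; rewrite T1 Rminus_diag Rabs_R0.
apply: NNPP => T_neq1; set t' := Rmin 1 (T + del / 2).
have t'del : t' <= T + del / 2 := Rmin_r _ _.
have t'T : T < t' by rewrite /t' /Rmin; case: Rle_dec => ?; lra.
suff : t' <= T by lra.
apply: ubT; split=> [|u [u0 ut]]; first by split; [lra | exact: Rmin_l].
have [uT | Tu] := Rlt_le_dec u T.
  have [t2 [[_ Pt2] ut2]] := below_sup (T - u) ltac:(lra).
  by apply: Pt2; lra.
by apply: Pnear; apply: Rabs_def1; lra.
Qed.

Section Tiling.

Variables (k : nat) (F : Rvec k -> Prop).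
Hypothesis F_fundamental : is_fundamental_domain F.

Lemma tile_exists y : exists g, F (subv y g).
Proof.
case: F_fundamental => _ cover _; have [f [z [Ff E]]] := cover y; exists z.
suff -> : subv y z = f by [].
by apply: functional_extensionality => i; rewrite /subv E; lra.
Qed.

Lemma tile_unique y g g' : F (subv y g) -> F (subv y g') -> g = g'.
Proof.
case: F_fundamental => _ _ disjoint Fg Fg'; apply: functional_extensionality.
by apply: (disjoint _ _ g g' Fg Fg') => i; rewrite /subv; lra.
Qed.

Lemma closureR_ext x y : closureR F x -> (forall i, x i = y i) -> closureR F y.
Proof. by move=> Fx /functional_extensionality <-. Qed.

Lemma closureR_self f : F f -> closureR F f.
Proof. by move=> Ff eps eps0; exists f; split=> // i; rewrite Rminus_diag Rabs_R0. Qed.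

Lemma neighbourset_opp z : neighbourset F z -> neighbourset F (vopp z).
Proof.
case=> x [Fx Fxz]; exists (fun i => x i - IntR (z i)); split=> //.
by apply: (closureR_ext Fx) => i; rewrite /vopp IntRN; lra.
Qed.

Lemma neighbourset_closure y g h :
  F (subv y g) -> closureR F (subv y h) -> neighbourset F (vsub h g).
Proof.
move=> Fg Fh; exists (subv y g); split; first exact: closureR_self.
by apply: (closureR_ext Fh) => i; rewrite /subv /vsub IntRB; lra.
Qed.

Lemma neighbourset0 : neighbourset F (fun _ => 0%R).
Proof.
have [g Fg] := tile_exists (fun _ => 0).
have := neighbourset_closure Fg (closureR_self Fg).
suff -> : vsub g g = (fun _ => 0%R) by [].
by apply: functional_extensionality => i; rewrite /vsub subrr.
Qed.

Lemma tile_near_bounded y : exists K : nat, forall y' g i,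
  nearv 1 y y' -> F (subv y' g) -> (`|g i| <= K)%N.
Proof.
case: F_fundamental => [[B HB] _ _].
have /fin_all_exists [K HK] : forall i : 'I_k, exists K : nat, B + Rabs (y i) + 1 <= INR K.
  by move=> i; have [K HK] := INR_unbounded (B + Rabs (y i) + 1); exists K; lra.
exists (\max_i K i)%N => y' g i near Fg; apply/leP/INR_le; rewrite -Rabs_IntR.
apply: (Rle_trans _ (INR (K i))); last by apply/le_INR/leP; exact: leq_bigmax.
have := HB _ Fg i; have := near i; have := HK i; rewrite /subv.
by unfold Rabs; repeat case: Rcase_abs; lra.
Qed.

Lemma tile_far_or_neighbour y g0 g : F (subv y g0) ->
  neighbourset F (vsub g g0) \/
  exists m : nat, forall y', nearv (/ INR m.+1) y y' -> ~ F (subv y' g).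
Proof.
move=> Fg0; have [|not_nb] := classic (neighbourset F (vsub g g0)); first by left.
right; apply: NNPP => not_far; apply: not_nb.
apply: (neighbourset_closure Fg0) => eps eps0.
have [N [invN N0]] := archimed_cor1 eps eps0.
have [y' near_far] := not_all_ex_not _ _ (not_ex_all_not _ _ not_far N.-1).
have [near /NNPP Fg] := imply_to_and _ _ near_far.
exists (subv y' g); split=> // i; rewrite /subv.
have -> : y i - IntR (g i) - (y' i - IntR (g i)) = - (y' i - y i) by lra.
by rewrite Rabs_Ropp; have := near i; rewrite prednK; [lra | apply/ltP].
Qed.

(* Only the finitely many tiles [box_dec v] meet the unit neighbourhood of [y],
   and each of them either touches the tile of [y] or keeps away from [y]. *)
Lemma neighbours_near y g0 : F (subv y g0) -> exists2 eps, 0 < eps &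
  forall y' g, nearv eps y y' -> F (subv y' g) -> neighbourset F (vsub g g0).
Proof.
move=> Fg0; have [K HK] := tile_near_bounded y.
have /fin_all_exists [m Hm] : forall v : {ffun 'I_k -> 'I_(K.*2.+1)}, exists m : nat,
    neighbourset F (vsub (box_dec v) g0) \/
    forall y', nearv (/ INR m.+1) y y' -> ~ F (subv y' (box_dec v)).
  move=> v; have [nb | [m far]] := tile_far_or_neighbour (box_dec v) Fg0.
    by exists 0%N; left.
  by exists m; right.
set M := (\max_v m v)%N.
have M_pos : 0 < INR M.+1 by apply: lt_0_INR; lia.
have invM : forall v, / INR M.+1 <= / INR (m v).+1.
  move=> v; apply: Rinv_le_contravar; first by apply: lt_0_INR; lia.
  by apply/le_INR/leP; rewrite ltnS; exact: leq_bigmax.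
have invM1 : / INR M.+1 <= 1.
  by rewrite -Rinv_1; apply: Rinv_le_contravar; [lra | rewrite S_INR; have := pos_INR M; lra].
exists (/ INR M.+1); first exact: Rinv_0_lt_compat.
move=> y' g near Fg.
have near1 : nearv 1 y y' by move=> i; have := near i; lra.
have [v gv] := box_dec_surj (fun i => HK y' g i near1 Fg); rewrite -gv in Fg *.
have [// | far] := Hm v; case: (far y' _ Fg) => i.
by have := near i; have := invM v; lra.
Qed.

Lemma nb_span_step g g' : nb_span F g -> neighbourset F (vsub g' g) -> nb_span F g'.
Proof.
move=> span_g nb; suff -> : g' = (fun i => (g i + vsub g' g i)%R) by exact: nb_spanD.
by apply: functional_extensionality => i; rewrite /vsub addrC subrK.
Qed.

Lemma nb_span_step_opp g g' : nb_span F g -> neighbourset F (vsub g g') -> nb_span F g'.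
Proof.
move=> span_g /neighbourset_opp nb; apply: nb_span_step span_g _.
suff -> : vsub g' g = vopp (vsub g g') by [].
by apply: functional_extensionality => i; rewrite /vopp /vsub opprB.
Qed.

Theorem nb_span_all z : nb_span F z.
Proof.
have [g0 Fg0] := tile_exists (fun _ => 0); set x0 := subv _ g0 in Fg0.
pose line t : Rvec k := fun i => x0 i + t * IntR (z i).
pose reach t := exists g, F (subv (line t) g) /\ nb_span F g.
suff [g [Fg span_g]] : reach 1.
  suff <- : g = z by [].
  apply: tile_unique Fg _; suff -> : subv (line 1) z = x0 by [].
  by apply: functional_extensionality => i; rewrite /subv /line; lra.
apply: unit_interval_connected; last first.
  exists (fun _ => 0%R); split; last exact: nb_span0.
  suff -> : subv (line 0) (fun _ => 0%R) = x0 by [].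
  by apply: functional_extensionality => i; rewrite /subv /line /=; lra.
move=> T _; have [gT FgT] := tile_exists (line T).
have [eps eps0 nearT] := neighbours_near FgT.
set M := (\max_i `|z i|)%N.
have M0 := pos_INR M.
set del := eps / (INR M + 1).
have del0 : 0 < del by apply: Rdiv_lt_0_compat; lra.
have del_eps : del * (INR M + 1) = eps by rewrite /del /Rdiv Rmult_assoc Rinv_l ?Rmult_1_r //; lra.
have near_line u : Rabs (u - T) < del -> nearv eps (line T) (line u).
  move=> uT i; rewrite /line.
  have -> : x0 i + u * IntR (z i) - (x0 i + T * IntR (z i)) = (u - T) * IntR (z i) by lra.
  have zM : Rabs (IntR (z i)) <= INR M.
    by rewrite Rabs_IntR; apply/le_INR/leP; exact: leq_bigmax.
  rewrite Rabs_mult; have := Rabs_pos (u - T); have := Rabs_pos (IntR (z i)); nra.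
exists del => // t u tT uT [g [Fg span_g]].
have span_gT : nb_span F gT := nb_span_step_opp span_g (nearT _ _ (near_line t tT) Fg).
have [gu Fgu] := tile_exists (line u).
by exists gu; split=> //; exact: nb_span_step span_gT (nearT _ _ (near_line u uT) Fgu).
Qed.

End Tiling.

Local Open Scope ring_scope.

Lemma nb_span_DeltaSet_sum (O : idomainType) k (omega : 'I_k -> O) F z :
  nb_span F z -> exists s : seq O,
    {in s, forall x, DeltaSet omega F x} /\ \sum_(i < k) omega i *~ z i = \sum_(x <- s) x.
Proof.
elim=> [|z' w _ [s [sDelta Ez']] nb_w].
  by exists [::]; split=> //; rewrite big_nil big1 // => i _; rewrite mulr0z.
exists (s ++ [:: \sum_(i < k) omega i *~ w i]); split.
  by move=> x; rewrite mem_cat inE => /orP[/sDelta // | /eqP ->]; exists w.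
by under eq_bigr do rewrite mulrzDr; rewrite big_split /= Ez' big_cat big_seq1.
Qed.

Lemma Poly_cat (R : nzSemiRingType) (u v : seq R) :
  Poly (u ++ v) = Poly u + 'X^(size u) * Poly v.
Proof.
apply/polyP => i; rewrite coefD coefXnM !coef_Poly nth_cat.
by case: ltnP => [_ | le_ui]; rewrite ?addr0 // [u`_i]nth_default // add0r.
Qed.

Lemma Poly_sum (R : nzSemiRingType) (s : seq R) :
  Poly s = \sum_(i < size s) s`_i *: 'X^i.
Proof.
rewrite -poly_def; apply/polyP => i; rewrite coef_Poly coef_poly.
by case: ltnP => // /(nth_default 0).
Qed.

Lemma Poly_head_behead (R : nzSemiRingType) (s : seq R) :
  Poly s = (head 0 s)%:P + 'X * Poly (behead s).
Proof.
by case: s => [|a s] /=; rewrite ?mulr0 ?addr0 // cons_poly_def addrC commr_polyX.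
Qed.

Lemma drop_poly_lead_coef (R : nzSemiRingType) (p : {poly R}) :
  drop_poly (size p).-1 p = (lead_coef p)%:P.
Proof.
by apply/polyP => -[|i]; rewrite coef_drop_poly coefC //= nth_default //; lia.
Qed.

Lemma drop_polyS (R : nzSemiRingType) (p : {poly R}) t :
  drop_poly t p = (p`_t)%:P + 'X * drop_poly t.+1 p.
Proof.
apply/polyP => i; rewrite coefD coefC coefXM !coef_drop_poly.
by case: i => [|i] /=; rewrite ?add0n ?addr0 ?add0r ?addSnnS.
Qed.

Section DigitExpansion.

Variables (O : idomainType) (p : {poly O}) (n : nat) (D Delta : O -> Prop).

Definition representable (a : {poly O}) : Prop :=
  exists s : seq O, {in s, forall x, D x} /\ exists q, a - Poly s = q * p.

Lemma representable_eqmod a b :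
  (exists q, a - b = q * p) -> representable b -> representable a.
Proof.
move=> [q1 ab] [s [sD [q2 bs]]]; exists s; split=> //; exists (q1 + q2).
by rewrite mulrDl -ab -bs; ring.
Qed.

Lemma representable0 : representable 0.
Proof. by exists [::]; split=> //; exists 0; rewrite mul0r subr0. Qed.

Lemma representable_shift b u : representable b -> {in u, forall x, D x} ->
  representable (Poly u + 'X^(size u) * b).
Proof.
move=> [s [sD [q bs]]] uD; exists (u ++ s); split.
  by move=> x; rewrite mem_cat => /orP[/uD | /sD].
by exists ('X^(size u) * q); rewrite Poly_cat -mulrA -bs; ring.
Qed.

Lemma representable_finiteness :
  (forall a, representable a) -> finiteness_property p D.
Proof.
move=> rep a; have [s [sD [q as_]]] := rep a.
exists (size s), (fun j => s`_j); split; first by move=> j; apply/sD/mem_nth.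
by exists q; rewrite -Poly_sum.
Qed.

Hypothesis p_size : size p = n.+2.

Definition carry_sum (e : nat -> O) : O := \sum_(t < n.+1) e t * p`_t.+1.

(* Pending digits [A] and carries [e]: the carry [e t] stands for the part
   [e t * (p_(t+1) + p_(t+2) x + ...)] of a multiple of [p] not yet absorbed
   into the digits already emitted. *)
Definition carry_poly (A : seq O) (e : nat -> O) : {poly O} :=
  Poly A + \sum_(t < n.+1) e t *: drop_poly t.+1 p.

Definition shift_carries (e : nat -> O) (c : O) : nat -> O :=
  fun t => if t is t'.+1 then e t' else c.

Lemma carry_poly_cons A e c :
  carry_poly A e = (head 0 A + carry_sum e)%:P +
    'X * (carry_poly (behead A) (shift_carries e (- c)) + c *: drop_poly 1 p).
Proof.
have shifted : \sum_(t < n.+1) shift_carries e (- c) t *: drop_poly t.+1 p =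
    - c *: drop_poly 1 p + \sum_(t < n.+1) e t *: drop_poly t.+2 p.
  rewrite big_ord_recl [in RHS]big_ord_recr /=.
  by rewrite (drop_poly_eq0 (m := n.+2)) ?p_size // scaler0 addr0.
have peeled : \sum_(t < n.+1) e t *: drop_poly t.+1 p =
    (carry_sum e)%:P + 'X * \sum_(t < n.+1) e t *: drop_poly t.+2 p.
  rewrite /carry_sum raddf_sum mulr_sumr -big_split /=; apply: eq_bigr => t _.
  by rewrite drop_polyS scalerDr polyCM -mul_polyC scalerAr.
rewrite /carry_poly shifted peeled Poly_head_behead polyCD scaleNr; ring.
Qed.

Lemma representable_carry_step A e d c : D d ->
  head 0 A + carry_sum e = d + p`_0 * c ->
  representable (carry_poly (behead A) (shift_carries e (- c))) ->
  representable (carry_poly A e).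
Proof.
move=> Dd digit rep; rewrite (carry_poly_cons _ _ c) digit.
set V := carry_poly _ _.
have rep_dV : representable (Poly [:: d] + 'X^(size [:: d]) * V).
  by apply: representable_shift => // x; rewrite inE => /eqP ->.
apply: (representable_eqmod _ rep_dV); exists c%:P.
have p_split : p = (p`_0)%:P + 'X * drop_poly 1 p by rewrite -drop_polyS drop_poly0l.
rewrite [in RHS]p_split /= cons_poly_def mul0r add0r.
by rewrite polyCD polyCM -mul_polyC expr1; ring.
Qed.

Hypothesis D_subset_sums : forall J : {set 'I_n.+1}, D (\sum_(j in J) p`_j.+1).

(* Each step moves every carry one position up, and a carry leaving position
   [n] disappears since [drop_poly n.+2 p = 0]; [r] counts the steps left. *)
Lemma representable_carries01 r e :
  (forall t, (t < n.+1)%N -> e t = 0 \/ e t = 1) ->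
  (forall t, (t < n.+1 - r)%N -> e t = 0) ->
  representable (carry_poly [::] e).
Proof.
elim: r e => [|r IH] e e01 e0.
  suff -> : carry_poly [::] e = 0 by exact: representable0.
  by rewrite /carry_poly /= add0r big1 // => t _; rewrite e0 ?scale0r ?subn0.
apply: (representable_carry_step (d := carry_sum e) (c := 0)).
- have -> : carry_sum e = \sum_(j in [set t : 'I_n.+1 | e t == 1]) p`_j.+1.
    rewrite [RHS]big_mkcond /=; apply: eq_bigr => t _; rewrite inE.
    by case: (e01 t (ltn_ord t)) => ->; rewrite ?eqxx ?mul1r // mul0r eq_sym oner_eq0.
  exact: D_subset_sums.
- by rewrite /= add0r mulr0 addr0.
- apply: IH => [[|t] | [|t]] lt_t /=; rewrite ?oppr0;
    [by left | apply: e01 | by [] | apply: e0]; lia.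
Qed.

Hypotheses (D0 : D 0) (p0_neq0 : p`_0 != 0).
Hypothesis D_residue_uniq :
  forall d d', D d -> D d' -> dvdO p`_0 (d - d') -> d = d'.

Lemma digit_quotient_eq0 d d' x : D d -> D d' -> d = d' + p`_0 * x -> x = 0.
Proof.
move=> Dd Dd' dd'.
have eq_dd' : d = d' by apply: D_residue_uniq => //; exists x; rewrite dd'; ring.
have : p`_0 * x = 0 by apply: (addrI d'); rewrite addr0 -dd' eq_dd'.
by move/eqP; rewrite mulf_eq0 (negbTE p0_neq0) => /eqP.
Qed.

Hypothesis DeltaN : forall x, Delta x -> Delta (- x).
Hypothesis Z_add_D : forall (e : 'I_n.+1 -> O) d, (forall j, Delta (e j)) -> D d ->
  exists d' c, D d' /\ Delta c /\ \sum_(j < n.+1) e j * p`_j.+1 + d = d' + p`_0 * c.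
Hypothesis Z_in_D : forall e : 'I_n.+1 -> O, (forall j, Delta (e j)) ->
  D (\sum_(j < n.+1) e j * p`_j.+1) \/ D (\sum_(j < n.+1) e j * p`_j.+1 + p`_0).

Lemma representable_carries r e :
  (forall t, (t < n.+1)%N -> Delta (e t)) ->
  (forall t, (t < n.+1 - r)%N -> e t = 0 \/ e t = 1) ->
  representable (carry_poly [::] e).
Proof.
elim: r e => [|r IH] e eDelta e01.
  apply: (representable_carries01 (r := n.+1)) => t; last by rewrite subnn.
  by move=> lt_t; apply: e01; rewrite subn0.
have eDelta' : forall j : 'I_n.+1, Delta (e j) by move=> j; apply: eDelta.
have [d' [c [Dd' [Dc sum_e]]]] := Z_add_D eDelta' D0; rewrite addr0 in sum_e.
have c01 : - c = 0 \/ - c = 1.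
  case: (Z_in_D eDelta') => [De | Dep0]; [left | right].
    by rewrite (digit_quotient_eq0 De Dd' sum_e) oppr0.
  have c1 : c + 1 = 0 by apply: digit_quotient_eq0 Dep0 Dd' _; rewrite sum_e; ring.
  by rewrite -[c](addrK 1) c1 sub0r opprK.
apply: (representable_carry_step (d := d') (c := c)) => //; first by rewrite /= add0r.
apply: IH => [[|t] | [|t]] lt_t //=; [exact: DeltaN | apply: eDelta | apply: e01]; lia.
Qed.

Lemma representable_digits_carries A e : {in A, forall x, D x} ->
  (forall t, (t < n.+1)%N -> Delta (e t)) -> representable (carry_poly A e).
Proof.
elim: A e => [|a A IH] e AD eDelta.
  by apply: (representable_carries (r := n.+1)) => // t; rewrite subnn.
have eDelta' : forall j : 'I_n.+1, Delta (e j) by move=> j; apply: eDelta.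
have [d' [c [Dd' [Dc sum_e]]]] := Z_add_D eDelta' (AD a (mem_head a A)).
apply: (representable_carry_step (d := d') (c := c)) => //; first by rewrite /= addrC.
apply: IH => [x xA | [|t] lt_t /=]; first by apply: AD; rewrite inE xA orbT.
  exact: DeltaN.
by apply: eDelta; lia.
Qed.

Hypotheses (p_monic : p \is monic) (Delta0 : Delta 0).

Lemma representable_add_const b c :
  representable b -> Delta c -> representable (b + c%:P).
Proof.
move=> [s [sD [q bs]]] Dc.
pose e t := if t == n then c else 0.
have rep_e : representable (carry_poly s e).
  by apply: representable_digits_carries => // t _; rewrite /e; case: eqP.
apply: (representable_eqmod _ rep_e); exists q.
have -> : carry_poly s e = Poly s + c%:P.
  rewrite /carry_poly big_ord_recr /= big1 ?add0r => [|t _].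
    by rewrite /e eqxx -{1}[n.+1]/(n.+2.-1) -p_size drop_poly_lead_coef (monicP p_monic) alg_polyC.
  by rewrite /e (ltn_eqF (ltn_ord t)) scale0r.
by rewrite -bs; ring.
Qed.

Lemma representable_add_monomial j b c :
  representable b -> Delta c -> representable (b + c *: 'X^j).
Proof.
elim: j b => [|j IH] b rep_b Dc; first by rewrite expr0 alg_polyC; exact: representable_add_const.
case: rep_b => s [sD [q bs]].
have head_D : {in [:: head 0 s], forall x, D x}.
  move=> x; rewrite inE => /eqP ->.
  by case: s {bs} sD => [|a s] sD //=; apply: sD; exact: mem_head.
have rep_tail : representable (Poly (behead s) + c *: 'X^j).
  apply: IH => //; exists (behead s); split; last by exists 0; rewrite subrr mul0r.
  by move=> x /mem_behead; apply: sD.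
apply: (representable_eqmod _ (representable_shift rep_tail head_D)); exists q.
rewrite /= cons_poly_def mul0r add0r expr1 -bs [Poly s]Poly_head_behead exprS scalerAr.
ring.
Qed.

Lemma representable_all :
  (forall c, exists s, {in s, forall x, Delta x} /\ c = \sum_(x <- s) x) ->
  forall a, representable a.
Proof.
move=> Delta_sums.
have add_sum j b s : representable b -> {in s, forall x, Delta x} ->
    representable (b + (\sum_(x <- s) x) *: 'X^j).
  elim: s b => [|x s IH] b rep_b sDelta; first by rewrite big_nil scale0r addr0.
  rewrite big_cons scalerDl [_ *: _ + _]addrC addrA.
  apply: representable_add_monomial; last by apply: sDelta; exact: mem_head.
  by apply: IH => // y ys; apply: sDelta; rewrite inE ys orbT.
move=> a; rewrite -[a in representable a]coefK poly_def.
elim: (size a) => [|m IH]; first by rewrite big_ord0; exact: representable0.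
by rewrite big_ord_recr /=; have [s [sDelta ->]] := Delta_sums a`_m; apply: add_sum.
Qed.

End DigitExpansion.

(* If [p(0) = 0], every element of [O] is a digit, in particular [1], whose
   coordinates [p(0) * f] would then all vanish. *)
Lemma GNS_coef0_neq0 (O : idomainType) k (omega : 'I_k -> O) (coord : O -> 'I_k -> int)
    (p : {poly O}) (D : O -> Prop) (F : Rvec k -> Prop) :
  (forall a : O, a = \sum_(i < k) omega i *~ coord a i) ->
  (forall (c : 'I_k -> int) (i : 'I_k), coord (\sum_(j < k) omega j *~ c j) i = c i) ->
  GNS p D -> assoc_fundamental_domain omega coord p D F -> p`_0 != 0.
Proof.
move=> coordK coord_sum [_ [cover _] _] [_ D_coord]; apply/eqP => p00.
have D1 : D 1.
  have [d [Dd [c]]] := cover 1; rewrite p00 mul0r => /eqP; rewrite subr_eq0 => /eqP ->.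
  exact: Dd.
have [f [_ coord1]] := (D_coord 1).1 D1.
have coord0 i : coord 0 i = 0.
  by have := coord_sum (fun _ => 0) i; rewrite big1 // => j _; rewrite mulr0z.
have coord1_eq0 i : coord 1 i = 0.
  apply/eqP; rewrite -(intr_eq0 R) -IntRE coord1 /Rsum big1 // => j _.
  by rewrite p00 mul0r coord0 Rmult_0_r.
have := coordK 1; rewrite big1 => [/eqP | i _]; first by rewrite oner_eq0.
by rewrite coord1_eq0 mulr0z.
Qed.

Theorem mainTheorem8
  (O : idomainType) (k : nat) (hk : (0 < k)%N)
  (omega : 'I_k -> O) (coord : O -> 'I_k -> int)
  (homega1 : omega (Ordinal hk) = 1)
  (hcoord : forall a : O, a = \sum_(i < k) omega i *~ coord a i)
  (hcoord_uniq : forall (c : 'I_k -> int) (i : 'I_k),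
      coord (\sum_(j < k) omega j *~ c j) i = c i)
  (n : nat) (p : {poly O}) (hsize : size p = n.+1)
  (D : O -> Prop) (F : Rvec k -> Prop)
  (hGNS : GNS p D)
  (hF : assoc_fundamental_domain omega coord p D F)
  (h1 : forall z d, Zset omega F n p z -> D d ->
          exists d' delta, D d' /\ DeltaSet omega F delta /\ z + d = d' + p`_0 * delta)
  (h2 : forall z, Zset omega F n p z -> D z \/ D (z + p`_0))
  (h3 : forall J : {set 'I_n}, D (\sum_(j in J) p`_(j.+1))) :
  finiteness_property p D.
Proof.
have p0_neq0 := GNS_coef0_neq0 hcoord hcoord_uniq hGNS hF.
case: hGNS hF => p_monic [_ D_residue_uniq] D0 [F_fundamental _].
case: n hsize h1 h2 h3 => [|n] p_size h1 h2 h3.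
  have p1 : p = 1.
    by rewrite (size1_polyC (eq_leq p_size)); move/monicP: p_monic; rewrite lead_coefE p_size => ->.
  move=> a; exists 0%N, (fun _ => 0); split; first by case.
  by exists a; rewrite big_ord0 subr0 p1 mulr1.
apply/representable_finiteness/(representable_all (Delta := DeltaSet omega F)
  p_size h3 D0 p0_neq0 D_residue_uniq _ _ _ p_monic).
- move=> _ [z [nb_z ->]]; exists (vopp z); split; first exact: neighbourset_opp.
  by rewrite -sumrN; apply: eq_bigr => i _; rewrite mulrNz.
- by move=> e d eDelta Dd; apply: h1 => //; exists e.
- by move=> e eDelta; apply: h2; exists e.
- exists (fun _ => 0); split; first exact: neighbourset0.
  by rewrite big1 // => i _; rewrite mulr0z.
- by move=> c; rewrite [c]hcoord; exact/nb_span_DeltaSet_sum/nb_span_all.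
Qed.
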